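(* Let $d\ge 3$, let $\mathcal M$ be a model of $\mathrm{PQM}_d$, and let $\varphi(x)$ be an $\mathcal L_d$-formula in the single free variable $x$ which is a finite conjunction of literals, each of the form $[t(x):p]$ or $\neg[t(x):p]$ with $p\in\mathbb H_d$ and $t(x)$ a term obtained from $x$ by applying finitely many function symbols $u_U$, $\pi_q$. If $\mathcal V_d\models\exists x\,\varphi(x)$, then $\mathcal M\models\exists x\,\varphi(x)$.
   Context: Notation. For $d\ge 1$, $\mathbb H_d$ is the set of complex linear subspaces of $\mathbb C^d$, ordered by inclusion $\le$, with $\top=\mathbb C^d$, $\bot=\{0\}$, $p^\bot$ the orthogonal complement, $p\wedge q=p\cap q$ and $p\vee q=p+q$. $\mathbb V_d\subseteq\mathbb H_d$ is the set of one-dimensional subspaces (rays). $\mathbb U_d$ is the set of unitary operators on $\mathbb C^d$, and for $U\in\mathbb U_d$, $p\in\mathbb H_d$, $U(p)=\{Uv: v\in p\}$. The Sasaki projection is $p\,\&\,q := q\cap(q^\bot+p)$. Subspaces $p,q$ are compatible iff $p=(p\wedge q)\vee(p\wedge q^\bot)$. Language $\mathcal L_d$: a first-order language without equality and without constants, having a unary function symbol $u_U$ for each $U\in\mathbb U_d$, a unary function symbol $\pi_q$ for each $q\in\mathbb H_d$, and a unary relation symbol $[\,\cdot:p]$ for each $p\in\mathbb H_d$. Theory $\mathrm{PQM}_d$ (over $\mathcal L_d$) has the following axioms, for all $p,q\in\mathbb H_d$ and $U\in\mathbb U_d$: ($\neg\bot$) $\exists x\,\neg[x:\bot]$; ($\top$)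 $\forall x\,[x:\top]$; ($\le$) if $p\le q$: $\forall x\,([x:p]\to[x:q])$; ($\wedge$) if $p,q$ are compatible: $\forall x\,([x:p]\wedge[x:q]\to[x:p\wedge q])$; ($\pi_i$) $\forall x\,([x:p]\to[\pi_q(x):p\,\&\,q])$; ($\pi_c$) if $p\le q$: $\forall x\,([\pi_p(\pi_q(x)):\bot]\to[\pi_p(x):\bot])$; ($\pi_\bot$) $\forall x\,([\pi_q(x):\bot]\to[x:q^\bot])$; ($u_i$) $\forall x\,([x:p]\to[u_U(x):U(p)])$; ($u_e$) $\forall x\,([u_U(x):p]\to[x:U^{-1}(p)])$. Vector model $\mathcal V_d$: the $\mathcal L_d$-structure with domain $\mathbb V_d\cup\{\bot\}$, $u_U^{\mathcal V_d}(x)=U(x)$, $\pi_q^{\mathcal V_d}(x)=x\,\&\,q$, and $[x:p]^{\mathcal V_d}$ holds iff $x\le p$. *)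

(* C^d is modelled as row vectors 'rV[R[i]]_d, where
   R : realType (R[i] = complex numbers over the reals R, from
   mathcomp-real-closed). *)
From HB Require Import structures.
From mathcomp Require Import all_boot all_order all_algebra.
From mathcomp Require Import reals.
From mathcomp.real_closed Require Import complex.
From Stdlib Require Lists.List.
Unset Printing Implicit Defensive.
Import Order.TTheory GRing.Theory Num.Theory.
Local Open Scope ring_scope.

Section PQM.
Variables (R : realType) (d : nat).

Local Notation C := (R[i]).
Local Notation vec := ('rV[C]_d).

Definition subspace := {vspace vec}.

Definition hdot (v w : vec) : C := \sum_(i < d) v 0 i * (w 0 i)^*.

Definition hdot_lin (w : vec) : 'Hom(vec, C^o) :=
  linfun (fun v : vec => (hdot v w : C^o)).
Definition ortho (p : subspace) : subspace :=
  (\bigcap_(w <- vbasis p) lker (hdot_lin w))%VS.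

Definition topH : subspace := fullv.
Definition botH : subspace := 0%VS.
Definition meetH (p q : subspace) : subspace := (p :&: q)%VS.
Definition joinH (p q : subspace) : subspace := (p + q)%VS.
Definition leH (p q : subspace) : bool := (p <= q)%VS.

Definition sasaki (p q : subspace) : subspace :=
  meetH q (joinH (ortho q) p).

Definition compatible (p q : subspace) : Prop :=
  p = joinH (meetH p q) (meetH p (ortho q)).

Definition is_unitary (U : 'M[C]_d) : bool :=
  U *m (map_mx Num.conj U)^T == 1%:M.
Definition unitary := {U : 'M[C]_d | is_unitary U}.

(* U(p) = { U v | v in p }; with row vectors, (U v)^T = v^T U^T *)
Definition act_lin (U : 'M[C]_d) : 'End(vec) :=
  linfun (fun v : vec => v *m U^T).
Definition actU (U : unitary) (p : subspace) : subspace :=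
  (act_lin (val U) @: p)%VS.
Definition invU (U : unitary) : 'M[C]_d := invmx (val U).
Definition actUinv (U : unitary) (p : subspace) : subspace :=
  (act_lin (invU U) @: p)%VS.

Inductive term : Type :=
  | tvar : term
  | tu : unitary -> term -> term
  | tpi : subspace -> term -> term.

Record literal : Type := Lit { lpos : bool; lterm : term; lsub : subspace }.

Definition conj_formula := seq literal.

Record structure : Type := Structure {
  dom : Type;
  u_ : unitary -> dom -> dom;
  pi_ : subspace -> dom -> dom;
  rel_ : subspace -> dom -> Prop }.

Fixpoint eval (M : structure) (t : term) (x : dom M) : dom M :=
  match t with
  | tvar => x
  | tu U t' => (u_ M) U (eval M t' x)
  | tpi q t' => (pi_ M) q (eval M t' x)
  end.

Definition sat_lit (M : structure) (x : dom M) (l : literal) : Prop :=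
  if lpos l then (rel_ M) (lsub l) (eval M (lterm l) x)
  else ~ (rel_ M) (lsub l) (eval M (lterm l) x).

Definition sat_formula (M : structure) (phi : conj_formula) (x : dom M) : Prop :=
  forall l, Stdlib.Lists.List.In l phi -> sat_lit M x l.

Definition sat_exists (M : structure) (phi : conj_formula) : Prop :=
  exists x : dom M, sat_formula M phi x.

Record PQM (M : structure) : Prop := {
  ax_nbot : exists x : dom M, ~ rel_ M botH x;
  ax_top : forall x : dom M, rel_ M topH x;
  ax_le : forall p q, leH p q -> forall x : dom M, rel_ M p x -> rel_ M q x;
  ax_meet : forall p q, compatible p q -> forall x : dom M,
      rel_ M p x -> rel_ M q x -> rel_ M (meetH p q) x;
  ax_pi_i : forall p q (x : dom M), rel_ M p x -> rel_ M (sasaki p q) (pi_ M q x);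
  ax_pi_c : forall p q, leH p q -> forall x : dom M,
      rel_ M botH (pi_ M p (pi_ M q x)) -> rel_ M botH (pi_ M p x);
  ax_pi_bot : forall q (x : dom M), rel_ M botH (pi_ M q x) -> rel_ M (ortho q) x;
  ax_u_i : forall p U (x : dom M), rel_ M p x -> rel_ M (actU U p) (u_ M U x);
  ax_u_e : forall p U (x : dom M), rel_ M p (u_ M U x) -> rel_ M (actUinv U p) x }.

(* domain: rays together with bot, i.e. subspaces of dimension <= 1 *)
Definition vdom := {p : subspace | (\dim p <= 1)%N}.

Lemma botH_dim : (\dim botH <= 1)%N.
Proof. by rewrite /botH dimv0. Qed.

Definition vbot : vdom := exist _ botH botH_dim.

(* the interpretations below always land in vdom; insubd is only used
   to package the value as an element of the domain *)
Definition vmodel : structure :=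
  @Structure vdom
    (fun U x => insubd vbot (actU U (val x)))
    (fun q x => insubd vbot (sasaki (val x) q))
    (fun p x => leH (val x) p).

End PQM.

(* Starting from a witness r of the vector model (a ray or bottom) we build an
   element y of M that realizes r: [y : p] holds exactly when r <= p.  Realizers
   are transported along u_U by (u_i), (u_e) and along pi_q by (pi_i), (pi_bot),
   so y satisfies every literal that r satisfies.  The crux is that an element
   lying in two distinct rays is bottom.  Rescaling the rays to w + u and w - u
   with u orthogonal to w and |u| < |w|, and choosing a third orthonormal
   direction (this needs d >= 3), the rays become (p, 0, 1) and (-p, 0, 1) in a
   real orthonormal frame, 0 < p < 1.  Projecting onto orthogonal complements
   of suitable rays shows that y then also lies in (0, q, 1) and (0, -q, 1)
   with 1/q^2 = 1/p^2 - 1, and once p^2 >= 1/2 in two orthogonal rays, which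
   forces y to be bottom.  Realizers of rays come from any non-bottom element
   by repeated projections. *)

From HB Require Import structures.
From mathcomp Require Import all_boot all_order all_algebra.
From mathcomp Require Import reals.
From mathcomp.real_closed Require Import complex.
From mathcomp Require Import ring lra zify.
From Stdlib Require Import Classical_Prop.
From Pilot Require Import Defs.
Import Order.TTheory GRing.Theory Num.Theory.
Set Implicit Arguments.
Unset Strict Implicit.
Unset Printing Implicit Defensive.
Local Open Scope ring_scope.

Section Hermitian.
Variables (R : realType) (d : nat).
Local Notation C := R[i].
Local Notation vec := 'rV[C]_d.
Local Notation subspace := (subspace R d).
Local Notation hdot := (hdot R d).
Local Notation ortho := (ortho R d).
Local Notation sasaki := (sasaki R d).
Local Notation rc := (real_complex R).

Definition hdotl (w : vec) (v : vec) : C^o := hdot v w.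

Lemma hdotl_is_linear w : linear (hdotl w).
Proof.
move=> a u v; rewrite /hdotl /hdot scaler_sumr -big_split /=.
by apply: eq_bigr => i _; rewrite !mxE mulrDl -scalerAl.
Qed.

HB.instance Definition _ w :=
  GRing.isLinear.Build C vec C^o *:%R (hdotl w) (hdotl_is_linear w).

Lemma hdot_linE w v : hdot_lin R d w v = hdot v w.
Proof. exact: (lfunE (hdotl w) v). Qed.

Lemma hdotDl u v w : hdot (u + v) w = hdot u w + hdot v w.
Proof. exact: (linearD (hdotl w)). Qed.

Lemma hdotBl u v w : hdot (u - v) w = hdot u w - hdot v w.
Proof. exact: (linearB (hdotl w)). Qed.

Lemma hdotZl k u w : hdot (k *: u) w = k * hdot u w.
Proof. by rewrite /hdot mulr_sumr; apply: eq_bigr => i _; rewrite !mxE mulrA. Qed.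

Lemma hdot0l w : hdot 0 w = 0.
Proof. exact: (linear0 (hdotl w)). Qed.

Lemma hdot_suml I (r : seq I) (P : pred I) (F : I -> vec) w :
  hdot (\sum_(i <- r | P i) F i) w = \sum_(i <- r | P i) hdot (F i) w.
Proof. exact: (linear_sum (hdotl w)). Qed.

Lemma hdotC v w : hdot w v = (hdot v w)^*.
Proof.
rewrite /hdot rmorph_sum; apply: eq_bigr => i _.
by rewrite rmorphM /= conjCK mulrC.
Qed.

Lemma hdotDr u v w : hdot w (u + v) = hdot w u + hdot w v.
Proof. by rewrite !(hdotC _ w) hdotDl rmorphD. Qed.

Lemma hdotBr u v w : hdot w (u - v) = hdot w u - hdot w v.
Proof. by rewrite !(hdotC _ w) hdotBl rmorphB. Qed.

Lemma hdotZr k u w : hdot w (k *: u) = k^* * hdot w u.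
Proof. by rewrite !(hdotC _ w) hdotZl rmorphM. Qed.

Lemma hdot_ge0 v : 0 <= hdot v v.
Proof. by apply: sumr_ge0 => i _; apply: mul_conjC_ge0. Qed.

Lemma hdot_eq0 v : (hdot v v == 0) = (v == 0).
Proof.
apply/idP/idP => [|/eqP->]; last by rewrite hdot0l.
rewrite /hdot psumr_eq0 => [/allP v0|i _]; last exact: mul_conjC_ge0.
apply/eqP/rowP => i; rewrite mxE.
by have := v0 i (mem_index_enum _); rewrite mul_conjC_eq0 => /eqP.
Qed.

Lemma hdot_gt0 v : (0 < hdot v v) = (v != 0).
Proof. by rewrite lt0r hdot_eq0 hdot_ge0 andbT. Qed.

Lemma memv_bigcap_lker (s : seq vec) v :
  (v \in (\bigcap_(w <- s) lker (hdot_lin R d w))%VS) <->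
  (forall w, w \in s -> hdot v w = 0).
Proof.
elim: s => [|w s IH]; first by rewrite big_nil memvf.
rewrite big_cons memv_cap memv_ker hdot_linE; split.
  by move=> /andP[/eqP vw /IH vs] w'; rewrite inE => /predU1P[->|/vs].
move=> vws; apply/andP; split; first by rewrite vws ?mem_head.
by apply/IH => w' w's; rewrite vws // inE w's orbT.
Qed.

Lemma memv_ortho (p : subspace) v :
  (v \in ortho p) <-> (forall w, w \in p -> hdot v w = 0).
Proof.
rewrite memv_bigcap_lker; split => [vp w /coord_vbasis ->|vp w /vbasis_mem]; last exact: vp.
rewrite hdotC hdot_suml big1 ?conjC0 // => i _.
by rewrite hdotZl hdotC vp ?conjC0 ?mulr0 // mem_nth ?size_tuple.
Qed.

Lemma memv_ortho_line x e : (x \in ortho <[e]>%VS) = (hdot x e == 0).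
Proof.
apply/idP/eqP => [/memv_ortho -> //|xe]; first exact: memv_line.
by apply/memv_ortho => w /vlineP[k ->]; rewrite hdotZr xe mulr0.
Qed.

Lemma vline_sub_ortho a b : hdot a b = 0 -> (<[a]> <= ortho <[b]>)%VS.
Proof. by move=> ab; rewrite -memvE memv_ortho_line ab. Qed.

Lemma capv_ortho (p : subspace) : (p :&: ortho p = 0)%VS.
Proof.
apply/eqP; rewrite -subv0; apply/subvP => x /memv_capP[xp /memv_ortho xo].
by rewrite memv0 -hdot_eq0 xo.
Qed.

Lemma dimv_full : \dim (fullv : subspace) = d.
Proof. by rewrite dimvf /= dim_matrix mul1r. Qed.

Lemma dimv_le (U : subspace) : (\dim U <= d)%N.
Proof. by rewrite -[X in (_ <= X)%N]dimv_full dimvS ?subvf. Qed.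

Lemma dim_lker_hdot w : (d <= (\dim (lker (hdot_lin R d w))).+1)%N.
Proof.
have := limg_ker_dim (hdot_lin R d w) fullv.
rewrite capfv dimv_full.
have : (\dim (hdot_lin R d w @: fullv) <= 1)%N.
  by rewrite (leq_trans (dimvS (subvf _))) // dimvf.
lia.
Qed.

Lemma dim_bigcap_lker (s : seq vec) :
  (d <= \dim (\bigcap_(w <- s) lker (hdot_lin R d w)) + size s)%N.
Proof.
elim: s => [|w s IH]; first by rewrite big_nil dimv_full addn0.
rewrite big_cons /=.
set A := lker _; set B := (\bigcap_(_ <- _) _)%VS.
have := dimv_sum_cap A B; have := dimv_le (A + B)%VS.
have := dim_lker_hdot w; rewrite -/A; move: IH.
move: (\dim A) (\dim B) (\dim (A + B))%VS (\dim (A :&: B))%VS; lia.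
Qed.

Lemma dim_ortho (p : subspace) : \dim (ortho p) = (d - \dim p)%N.
Proof.
have := dim_bigcap_lker (vbasis p); rewrite size_tuple.
have := dimv_le (p + ortho p)%VS.
rewrite (dimv_disjoint_sum (capv_ortho p)) /Defs.ortho.
move: (\dim p) (\dim (\bigcap_(w <- vbasis p) lker (hdot_lin R d w)))%VS; lia.
Qed.

Lemma addv_ortho (p : subspace) : (p + ortho p = fullv)%VS.
Proof.
apply/eqP; rewrite eqEdim subvf (dimv_disjoint_sum (capv_ortho p)) dim_ortho.
have := dimv_le p; rewrite dimv_full.
move: (\dim p); lia.
Qed.

Lemma orthoK (p : subspace) : ortho (ortho p) = p.
Proof.
apply/esym/eqP; rewrite eqEdim !dim_ortho.
have pd := dimv_le p.
rewrite subKn // leqnn andbT.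
apply/subvP => x xp; apply/memv_ortho => w /memv_ortho wo.
by rewrite hdotC wo // conjC0.
Qed.

Lemma ortho_decomp (p : subspace) x :
  exists2 x1, x1 \in p & exists2 x2, x2 \in ortho p & x = x1 + x2.
Proof. by apply/memv_addP; rewrite addv_ortho memvf. Qed.

Lemma capv_sub_ortho (p q : subspace) : (p <= ortho q)%VS -> (p :&: q = 0)%VS.
Proof.
move=> pq; apply/eqP; rewrite -subv0 -(capv_ortho q) capvC.
by rewrite capvS.
Qed.

Lemma compatible_sub_ortho (p q : subspace) :
  (p <= ortho q)%VS -> compatible R d p q.
Proof.
move=> pq; rewrite /compatible /meetH /joinH capv_sub_ortho // add0v.
exact/esym/capv_idPl.
Qed.

Lemma compatible_ortho (f s : subspace) : (f <= s)%VS -> compatible R d s (ortho f).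
Proof.
move=> fs; rewrite /compatible /joinH /meetH orthoK (capv_idPr fs).
apply/eqP; rewrite eqEsubv subv_add capvSl fs !andbT.
apply/subvP => x xs; have [x1 x1f [x2 x2o ex]] := ortho_decomp f x.
rewrite ex addrC memv_add //; apply/memv_capP; split => //.
by rewrite -[x2](addKr x1) -ex rpredD ?rpredN // (subvP fs).
Qed.

Lemma sasaki_vline (q : subspace) x x1 x2 :
  x1 \in q -> x2 \in ortho q -> x = x1 + x2 -> (sasaki <[x]> q <= <[x1]>)%VS.
Proof.
move=> x1q x2o ->; apply/subvP => z.
rewrite /Defs.sasaki /meetH /joinH.
move=> /memv_capP[zq /memv_addP[w wo [y /vlineP[k ->] ez]]].
have : w + k *: x2 \in (q :&: ortho q)%VS.
  apply/memv_capP; split; last by rewrite rpredD ?rpredZ.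
  have -> : w + k *: x2 = z - k *: x1.
    by rewrite ez scalerDr [k *: x1 + _]addrC addrA addrK.
  by rewrite rpredB ?rpredZ.
rewrite capv_ortho memv0 => /eqP w0.
by rewrite ez scalerDr addrCA w0 addr0 memvZ ?memv_line.
Qed.

Lemma sasaki_sub_ortho (p q : subspace) : (p <= ortho q)%VS -> sasaki p q = 0%VS.
Proof. by move=> pq; rewrite /Defs.sasaki /meetH /joinH (addv_idPl pq) capv_ortho. Qed.

Lemma sasaki_subl (p q : subspace) : (ortho q <= p)%VS -> (sasaki p q <= p)%VS.
Proof.
move=> qp; rewrite /Defs.sasaki /meetH /joinH.
by rewrite (subv_trans (capvSr _ _)) // subv_add qp subvv.
Qed.


Lemma conjC_rc (r : R) : (rc r)^* = rc r.
Proof. by rewrite conj_Creal // complex_real. Qed.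

Lemma hdot_rcZ k l (x y : vec) : hdot (rc k *: x) (rc l *: y) = rc (k * l) * hdot x y.
Proof. by rewrite hdotZl hdotZr conjC_rc rmorphM mulrA. Qed.

Lemma vlineZ (k : C) (x : vec) : k != 0 -> <[k *: x]>%VS = <[x]>%VS.
Proof.
move=> k0; apply/eqP; rewrite eqEsubv -!memvE memvZ ?memv_line //=.
by apply/vlineP; exists k^-1; rewrite scalerA mulVf ?scale1r.
Qed.

Lemma unit_decomp (x : vec) : x != 0 ->
  exists2 k : R, 0 < k & exists2 y : vec, hdot y y = 1 & x = rc k *: y.
Proof.
rewrite -hdot_gt0 => xx0; set h := complex.Re (hdot x x).
have eh : rc h = hdot x x by apply/RRe_real/gtr0_real.
have h0 : 0 < h by rewrite -ltcR eh.
have k0 : 0 < Num.sqrt h by rewrite sqrtr_gt0.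
exists (Num.sqrt h) => //; exists (rc (Num.sqrt h)^-1 *: x).
  rewrite hdot_rcZ -eh -rmorphM -invfM -expr2 sqr_sqrtr ?ltW //.
  by rewrite mulVf ?gt_eqF // rmorph1.
by rewrite scalerA -rmorphM divff ?gt_eqF // rmorph1 scale1r.
Qed.

(* The only use of [3 <= d]. *)
Lemma exists_ortho2 (u w : vec) : (3 <= d)%N ->
  exists2 v : vec, v != 0 & hdot v u = 0 /\ hdot v w = 0.
Proof.
move=> d3; set S := (<[u]> + <[w]>)%VS.
have S2 : (\dim S <= 2)%N.
  apply: (leq_trans (dimv_add_leqif _ _).1).
  by rewrite !dim_vline; case: (u != 0); case: (w != 0).
have : (0 < \dim (ortho S))%N by rewrite dim_ortho; move: S2 d3; move: (\dim S); lia.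
rewrite lt0n dimv_eq0 -vpick0 => v0; exists (vpick (ortho S)) => //.
have /memv_ortho vS := memv_pick (ortho S).
split; apply: vS.
  by rewrite (subvP (addvSl _ _)) ?memv_line.
by rewrite (subvP (addvSr _ _)) ?memv_line.
Qed.

Definition orthonormal3 (u v w : vec) :=
  [/\ hdot u u = 1, hdot v v = 1 & hdot w w = 1] /\
  [/\ hdot u v = 0, hdot u w = 0 & hdot v w = 0].

Definition frame (u v w : vec) (a b c : R) : vec := rc a *: u + rc b *: v + rc c *: w.

Lemma orthonormal3_swap u v w : orthonormal3 u v w -> orthonormal3 v u w.
Proof. by case=> [[uu vv ww] [uv uw vw]]; split; split; rewrite // hdotC uv conjC0. Qed.

Lemma frame_swap u v w a b c : frame u v w a b c = frame v u w b a c.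
Proof. by rewrite /frame [rc a *: u + _]addrC. Qed.

Lemma hdot_frame u v w a b c a' b' c' : orthonormal3 u v w ->
  hdot (frame u v w a b c) (frame u v w a' b' c') = rc (a * a' + b * b' + c * c').
Proof.
case=> [[uu vv ww] [uv uw vw]].
have [vu wu wv] : [/\ hdot v u = 0, hdot w u = 0 & hdot w v = 0].
  by split; rewrite hdotC ?uv ?uw ?vw conjC0.
rewrite /frame !hdotDl !hdotZl !hdotDr !hdotZr !conjC_rc.
rewrite uu vv ww uv uw vw vu wu wv !rmorphD !rmorphM /=; ring.
Qed.

Lemma frame_neq0 u v w a b : orthonormal3 u v w -> frame u v w a b 1 != 0.
Proof.
move=> uvw; apply/eqP => f0; have := hdot_frame a b 1 0 0 1 uvw.
by rewrite f0 hdot0l !mulr0 !add0r mulr1 rmorph1 => /esym/eqP; rewrite oner_eq0.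
Qed.

Lemma dim1_vline (r : subspace) : (\dim r <= 1)%N -> r = <[vpick r]>%VS.
Proof.
move=> r1; apply/eqP; rewrite eq_sym eqEdim -memvE memv_pick dim_vline vpick0.
by have [->|] := eqVneq r 0%VS; rewrite ?dimv0.
Qed.

Lemma dim_vline_le1 (v : vec) : (\dim <[v]> <= 1)%N.
Proof. by rewrite dim_vline leq_b1. Qed.

Lemma dim_actU (U : unitary R d) (r : subspace) : (\dim (actU R d U r) <= \dim r)%N.
Proof. by rewrite -(limg_ker_dim (act_lin R d (val U)) r) leq_addl. Qed.

Lemma dim_sasaki_le1 (r q : subspace) : (\dim r <= 1)%N -> (\dim (sasaki r q) <= 1)%N.
Proof.
move=> /dim1_vline ->; have [e1 e1q [e2 e2o ee]] := ortho_decomp q (vpick r).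
exact: leq_trans (dimvS (sasaki_vline e1q e2o ee)) (dim_vline_le1 _).
Qed.

Lemma dim_vdom (x : vdom R d) : (\dim (val x) <= 1)%N.
Proof. exact: valP x. Qed.

End Hermitian.

Section Model.
Variables (R : realType) (d : nat) (M : structure R d) (hM : PQM R d M).
Local Notation C := R[i].
Local Notation subspace := (subspace R d).
Local Notation hdot := (hdot R d).
Local Notation ortho := (ortho R d).
Local Notation sasaki := (sasaki R d).
Local Notation rc := (real_complex R).
Local Notation rel := (rel_ R d M).
Local Notation pi := (pi_ R d M).
Local Notation domM := (dom R d M).
Hypothesis d_ge3 : (3 <= d)%N.
Local Notation ax_nbot := (Defs.ax_nbot R d M hM).
Local Notation ax_top := (Defs.ax_top R d M hM).
Local Notation ax_le := (Defs.ax_le R d M hM).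
Local Notation ax_meet := (Defs.ax_meet R d M hM).
Local Notation ax_pi_i := (Defs.ax_pi_i R d M hM).
Local Notation ax_pi_bot := (Defs.ax_pi_bot R d M hM).
Local Notation ax_u_i := (Defs.ax_u_i R d M hM).
Local Notation ax_u_e := (Defs.ax_u_e R d M hM).

Lemma rel0_ortho (p q : subspace) y : (p <= ortho q)%VS -> rel p y -> rel q y -> rel 0%VS y.
Proof.
move=> pq py qy; rewrite -(capv_sub_ortho pq).
exact: ax_meet _ _ (compatible_sub_ortho pq) _ py qy.
Qed.

Lemma rel_pi (p q r : subspace) y : (sasaki p q <= r)%VS -> rel p y -> rel r (pi q y).
Proof. by move=> pqr /(ax_pi_i _ q); apply: ax_le. Qed.

(* The components of [a] and [b] orthogonal to [n] are orthogonal, so the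
   projection onto the complement of [n] sends [y] to bottom. *)
Lemma rel_vline_residue (y : domM) a b n : n != 0 ->
  hdot a b * hdot n n = hdot a n * hdot n b ->
  rel <[a]>%VS y -> rel <[b]>%VS y -> rel <[n]>%VS y.
Proof.
move=> n0 abn ya yb; set N := hdot n n; have N0 : N != 0 by rewrite hdot_eq0.
set q := ortho <[n]>%VS; have qn : ortho q = <[n]>%VS by rewrite orthoK.
set a1 := a - (hdot a n / N) *: n; set b1 := b - (hdot b n / N) *: n.
have a1q : a1 \in q by rewrite memv_ortho_line hdotBl hdotZl divfK ?subrr.
have b1q : b1 \in q by rewrite memv_ortho_line hdotBl hdotZl divfK ?subrr.
have nq k : k *: n \in ortho q by rewrite qn memvZ ?memv_line.
have a1b1 : hdot a1 b1 = 0.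
  rewrite !hdotBl !hdotBr !hdotZl !hdotZr -/N rmorphM fmorphV /= -hdotC.
  rewrite (geC0_conj (hdot_ge0 n)) -/N.
  have -> : hdot a b = hdot a n * hdot n b / N by rewrite -abn mulfK.
  by field.
have y0 : rel 0%VS (pi q y).
  apply: (rel0_ortho (vline_sub_ortho a1b1)).
    exact: rel_pi (sasaki_vline a1q (nq _) (esym (subrK _ _))) ya.
  exact: rel_pi (sasaki_vline b1q (nq _) (esym (subrK _ _))) yb.
by rewrite -qn; apply: ax_pi_bot.
Qed.

Lemma rel_frame u v w y a1 a2 a3 b1 b2 b3 n1 n2 : orthonormal3 u v w ->
  (a1 * b1 + a2 * b2 + a3 * b3) * (n1 * n1 + n2 * n2 + 1) =
  (a1 * n1 + a2 * n2 + a3) * (n1 * b1 + n2 * b2 + b3) ->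
  rel <[frame u v w a1 a2 a3]>%VS y -> rel <[frame u v w b1 b2 b3]>%VS y ->
  rel <[frame u v w n1 n2 1]>%VS y.
Proof.
move=> uvw abn; apply: rel_vline_residue; first exact: frame_neq0.
by rewrite !hdot_frame // -!rmorphM !mul1r !mulr1 abn.
Qed.

Lemma rel0_frame u v w y a1 a2 a3 b1 b2 b3 : orthonormal3 u v w ->
  a1 * b1 + a2 * b2 + a3 * b3 = 0 ->
  rel <[frame u v w a1 a2 a3]>%VS y -> rel <[frame u v w b1 b2 b3]>%VS y ->
  rel 0%VS y.
Proof.
move=> uvw ab; apply: rel0_ortho; apply: vline_sub_ortho.
by rewrite hdot_frame // ab rmorph0.
Qed.

Lemma rel_frame_pm u v w y p x z : orthonormal3 u v w ->
  (1 - p ^+ 2) * (x ^+ 2 + z ^+ 2 + 1) = 1 - p ^+ 2 * x ^+ 2 ->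
  rel <[frame u v w p 0 1]>%VS y -> rel <[frame u v w (- p) 0 1]>%VS y ->
  rel <[frame u v w x z 1]>%VS y.
Proof. by move=> uvw pxz; apply: rel_frame => //; lra. Qed.

Lemma rel0_frame_wide u v w y p : orthonormal3 u v w ->
  1 <= 2 * p ^+ 2 -> p ^+ 2 < 1 ->
  rel <[frame u v w p 0 1]>%VS y -> rel <[frame u v w (- p) 0 1]>%VS y -> rel 0%VS y.
Proof.
move=> uvw p2ge p2lt ya yb.
(* [x] and [z] solve the constraint of [rel_frame_pm], and [z^2 = x^2 + 1]
   makes the rays [(x, z, 1)] and [(x, -z, 1)] orthogonal. *)
set x : R := Num.sqrt ((2 * p ^+ 2 - 1) / (2 - p ^+ 2)).
set z : R := Num.sqrt (x ^+ 2 + 1).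
have x2 : x ^+ 2 * (2 - p ^+ 2) = 2 * p ^+ 2 - 1.
  by rewrite sqr_sqrtr ?divfK ?divr_ge0 ?gt_eqF //; lra.
have z2 : z ^+ 2 = x ^+ 2 + 1 by rewrite sqr_sqrtr // addr_ge0 ?sqr_ge0.
clearbody x z.
have pxz (t : R) : t ^+ 2 = z ^+ 2 -> rel <[frame u v w x t 1]>%VS y.
  by move=> tz; apply: (rel_frame_pm uvw _ ya yb); rewrite tz z2; lra.
apply: (rel0_frame uvw _ (pxz z erefl) (pxz (- z) (sqrrN z))); lra.
Qed.

Lemma rel0_frame_pm n u v w y p : orthonormal3 u v w ->
  0 < p -> p < 1 -> 1 <= n%:R * p ^+ 2 ->
  rel <[frame u v w p 0 1]>%VS y -> rel <[frame u v w (- p) 0 1]>%VS y -> rel 0%VS y.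
Proof.
elim: n u v w p => [|n IH] u v w p uvw p0 p1 np ya yb; first by rewrite mul0r ler10 in np.
have [wide|narrow] := lerP 1 (2 * p ^+ 2); first by apply: (rel0_frame_wide uvw wide _ ya yb); nra.
(* [1 / q^2 = 1 / p^2 - 1], which is why [n] decreases. *)
set q : R := Num.sqrt (p ^+ 2 / (1 - p ^+ 2)).
have q2 : q ^+ 2 * (1 - p ^+ 2) = p ^+ 2.
  by rewrite sqr_sqrtr ?divfK ?divr_ge0 ?sqr_ge0 ?gt_eqF //; nra.
have q0 : 0 < q by rewrite sqrtr_gt0 divr_gt0 ?exprn_gt0 //; nra.
clearbody q.
have pq (t : R) : t ^+ 2 = q ^+ 2 -> rel <[frame v u w t 0 1]>%VS y.
  by move=> tq; rewrite -frame_swap; apply: (rel_frame_pm uvw _ ya yb); rewrite tq; lra.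
have q2lt : q ^+ 2 < 1 by nra.
apply: (IH v u w q (orthonormal3_swap uvw) q0 _ _ (pq q erefl) (pq (- q) (sqrrN q))).
  by nra.
have p2lt : 0 < 1 - p ^+ 2 by nra.
rewrite -(ler_pM2r p2lt) mul1r -mulrA q2; rewrite -natr1 in np; nra.
Qed.

Lemma rel0_vline_pm u w y : hdot u w = 0 -> u != 0 -> hdot u u < hdot w w ->
  rel <[w + u]>%VS y -> rel <[w - u]>%VS y -> rel 0%VS y.
Proof.
move=> uw u0 uuww ya yb.
have w0 : w != 0 by apply: contraTneq uuww => ->; rewrite hdot0l le_gtF ?hdot_ge0.
have [ku ku0 [u1 u1u eu]] := unit_decomp u0.
have [kw kw0 [w1 w1w ew]] := unit_decomp w0.
have u1w1 : hdot u1 w1 = 0.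
  move/eqP: uw; rewrite eu ew hdot_rcZ mulf_eq0 fmorph_eq0 mulf_eq0.
  by rewrite (gt_eqF ku0) (gt_eqF kw0) => /eqP.
have [v v0 [vu vw]] := exists_ortho2 u1 w1 d_ge3.
have [kv kv0 [v1 v1v ev]] := unit_decomp v0.
have v1x x : hdot v x = 0 -> hdot v1 x = 0.
  by rewrite ev hdotZl => /eqP; rewrite mulf_eq0 fmorph_eq0 (gt_eqF kv0) => /eqP.
have uvw : orthonormal3 u1 v1 w1.
  by split; split; rewrite // ?v1x // hdotC v1x ?conjC0.
have kuw : ku < kw.
  move: uuww; rewrite eu ew !hdot_rcZ u1u w1w !mulr1 ltcR => kk; nra.
set p := ku / kw.
have p0 : 0 < p by rewrite divr_gt0.
have p1 : p < 1 by rewrite ltr_pdivrMr // mul1r.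
have frameE s : rc kw *: frame u1 v1 w1 (s / kw) 0 1 = rc s *: u1 + rc kw *: w1.
  rewrite /frame rmorph0 rmorph1 scale0r addr0 scale1r scalerDr scalerA -rmorphM.
  by rewrite mulrC divfK ?gt_eqF.
have kw0' : rc kw != 0 by rewrite fmorph_eq0 gt_eqF.
apply: (rel0_frame_pm (n := Num.bound (p ^+ 2)^-1) uvw p0 p1).
- by rewrite -ler_pdivrMr ?exprn_gt0 // mul1r ltW // archi_boundP // invr_ge0 sqr_ge0.
- by rewrite -(vlineZ _ kw0') frameE -eu addrC -ew.
- by rewrite -mulNr -(vlineZ _ kw0') frameE rmorphN scaleNr -eu addrC -ew.
Qed.

Lemma rel0_vline2 a b y : a != 0 -> b != 0 -> <[a]>%VS != <[b]>%VS ->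
  rel <[a]>%VS y -> rel <[b]>%VS y -> rel 0%VS y.
Proof.
move=> a0 b0 ab ya yb; set c := hdot a b.
have [c0|c0] := eqVneq c 0; first exact: rel0_ortho (vline_sub_ortho c0) ya yb.
have cb0 : c *: b != 0 by rewrite scaler_eq0 negb_or c0 b0.
have [ka ka0 [a1 a1a ea]] := unit_decomp a0.
have [kb kb0 [b1 b1b eb]] := unit_decomp cb0.
have [g g0 a1b1] : exists2 g : R, 0 < g & hdot a1 b1 = rc g.
  have kab : 0 < rc (ka * kb) by rewrite ltcR mulr_gt0.
  have ab1 : rc (ka * kb) * hdot a1 b1 = c^* * c by rewrite -hdot_rcZ -ea -eb hdotZr.
  have ab1_gt0 : 0 < hdot a1 b1 by rewrite -(pmulr_rgt0 _ kab) ab1 mulrC mul_conjC_gt0.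
  by exists (complex.Re (hdot a1 b1)); rewrite ?RRe_real ?gtr0_real // -ltcR RRe_real ?gtr0_real.
have b1a1 : hdot b1 a1 = rc g by rewrite hdotC a1b1 conjC_rc.
(* [a1] and [b1] are unit vectors with a positive real inner product, so
   [a1 - b1] is orthogonal to and shorter than [a1 + b1]. *)
have ea1 : <[a]>%VS = <[a1]>%VS by rewrite ea vlineZ ?fmorph_eq0 ?gt_eqF.
have eb1 : <[b]>%VS = <[b1]>%VS by rewrite -(vlineZ b c0) eb vlineZ ?fmorph_eq0 ?gt_eqF.
have two0 : 2 != 0 :> C by rewrite pnatr_eq0.
apply: (@rel0_vline_pm (a1 - b1) (a1 + b1)).
- by rewrite hdotBl !hdotDr a1a b1b a1b1 b1a1 (addrC (rc g)) subrr.
- by apply: contraNneq ab => /subr0_eq a1b1E; rewrite ea1 eb1 a1b1E.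
- rewrite hdotBl !hdotBr !hdotDl !hdotDr a1a b1b a1b1 b1a1 -subr_gt0.
  have -> : 1 + rc g + (rc g + 1) - (1 - rc g - (rc g - 1)) = rc (4 * g).
    by rewrite rmorphM rmorph_nat; ring.
  by rewrite ltcR mulr_gt0.
- by rewrite addrACA subrr addr0 -mulr2n -scaler_nat vlineZ // -ea1.
- by rewrite opprB addrC addrA subrK -mulr2n -scaler_nat vlineZ // -eb1.
Qed.

Lemma rel0_notin e (p : subspace) y : ~~ (<[e]> <= p)%VS ->
  rel <[e]>%VS y -> rel p y -> rel 0%VS y.
Proof.
rewrite -memvE => ep ye yp.
have e0 : e != 0 by apply: contraNneq ep => ->; rewrite mem0v.
have [e1 e1p [e2 e2o ee]] := ortho_decomp p e.
have [e10|e10] := eqVneq e1 0.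
  by apply: (rel0_ortho _ ye yp); rewrite -memvE ee e10 add0r.
set q := ortho <[e1]>%VS; have qe1 : ortho q = <[e1]>%VS by rewrite orthoK.
have e2q : e2 \in q by rewrite memv_ortho_line (memv_ortho p e2).1.
have e1q : e1 \in ortho q by rewrite qe1 memv_line.
have ye2 := rel_pi (sasaki_vline e2q e1q (etrans ee (addrC _ _))) ye.
have qp : (ortho q <= p)%VS by rewrite qe1 -memvE.
have yp' := rel_pi (sasaki_subl qp) yp.
have ye1 : rel <[e1]>%VS y.
  by rewrite -qe1; apply: ax_pi_bot; apply: rel0_ortho ye2 yp'; rewrite -memvE.
apply: (rel0_vline2 e0 e10 _ ye ye1).
by apply: contraNneq ep => ee1; rewrite memvE ee1 -memvE.
Qed.

Definition realizes (y : domM) (r : subspace) := rel r y /\ (rel 0%VS y -> r = 0%VS).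

Lemma realizes_rel y r p : (\dim r <= 1)%N -> realizes y r -> rel p y <-> (r <= p)%VS.
Proof.
move=> /dim1_vline r1 [yr yr0]; split => [yp|rp]; last exact: ax_le _ _ rp _ yr.
have [y0|y0] := classic (rel 0%VS y); first by rewrite yr0 // sub0v.
rewrite r1 in yr *; apply/negPn/negP => ep.
exact: y0 (rel0_notin ep yr yp).
Qed.

Lemma realizes_u y r U : realizes y r -> realizes (u_ R d M U y) (actU R d U r).
Proof.
move=> [yr yr0]; split; first exact: ax_u_i.
move=> /ax_u_e; rewrite /actUinv limg0 => /yr0 ->.
exact: limg0.
Qed.

Lemma realizes_pi y r q : (\dim r <= 1)%N -> realizes y r -> realizes (pi q y) (sasaki r q).
Proof.
move=> r1 yr; split; first exact: ax_pi_i yr.1.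
by move=> /ax_pi_bot /(realizes_rel _ r1 yr) /sasaki_sub_ortho.
Qed.

Lemma realizes_eval (t : term R d) y (x : vdom R d) :
  realizes y (val x) -> realizes (eval R d M t y) (val (eval R d (vmodel R d) t x)).
Proof.
move=> yx; elim: t => [|U t IH|q t IH] //=; rewrite insubdK.
- exact: realizes_u.
- exact: leq_trans (dim_actU _ _) (dim_vdom _).
- exact: realizes_pi (dim_vdom _) IH.
- exact: dim_sasaki_le1 (dim_vdom _).
Qed.

Lemma realizes_pi_vline g e z : hdot g e != 0 ->
  realizes z <[g]>%VS -> realizes (pi <[e]>%VS z) <[e]>%VS.
Proof.
move=> ge zg; split; first exact: rel_pi (capvSl _ _) zg.1.
move=> /ax_pi_bot /(realizes_rel _ (dim_vline_le1 g) zg).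
by rewrite -memvE memv_ortho_line (negPf ge).
Qed.

Lemma realizes_some_vline s x : rel s x -> ~ rel 0%VS x ->
  exists2 g, g != 0 & exists z, realizes z <[g]>%VS.
Proof.
have [n] := ubnP (\dim s); elim: n s x => // n IH s x sn xs x0.
have s0 : s != 0%VS by apply/eqP => s0; apply: x0; rewrite -s0.
set g := vpick s; have g0 : g != 0 by rewrite vpick0.
have gs : (<[g]> <= s)%VS by rewrite -memvE memv_pick.
have [zg0|zg0] := classic (rel 0%VS (pi <[g]>%VS x)); last first.
  by exists g => //; exists (pi <[g]>%VS x); split => [|/zg0 //]; apply: rel_pi (capvSl _ _) xs.
apply: (IH (s :&: ortho <[g]>)%VS x _ _ x0).
  rewrite -ltnS (leq_trans _ sn) // ltnS (ltn_leqif (dimv_leqif_eq (capvSl _ _))).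
  apply: contraNneq g0 => sg; rewrite -hdot_eq0 -memv_ortho_line.
  by rewrite (subvP (capvSr s _)) // sg memv_pick.
exact: ax_meet _ _ (compatible_ortho gs) _ xs (ax_pi_bot _ _ zg0).
Qed.

Lemma exists_realizes_vline e : e != 0 -> exists z, realizes z <[e]>%VS.
Proof.
move=> e0; have [x x0] := ax_nbot.
have [g g0 [z zg]] := realizes_some_vline (ax_top x) x0.
have [ge|ge] := eqVneq (hdot g e) 0; last by exists (pi <[e]>%VS z); apply: realizes_pi_vline zg.
have gge : hdot g (g + e) != 0 by rewrite hdotDr ge addr0 hdot_eq0.
have gee : hdot (g + e) e != 0 by rewrite hdotDl ge add0r hdot_eq0.
by exists (pi <[e]>%VS (pi <[g + e]>%VS z)); apply: realizes_pi_vline gee (realizes_pi_vline gge zg).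
Qed.

Lemma exists_realizes r : (\dim r <= 1)%N -> exists y, realizes y r.
Proof.
have [-> _|r0 /dim1_vline ->] := eqVneq r 0%VS; last by apply: exists_realizes_vline; rewrite vpick0.
have [x _] := ax_nbot; exists (pi 0%VS x); split => //.
exact: rel_pi (capvSl _ _) (ax_top x).
Qed.

End Model.

Theorem mainTheorem14 (R : realType) (d : nat) (hd : (3 <= d)%N)
    (M : structure R d) (hM : PQM R d M) (phi : conj_formula R d) :
  sat_exists R d (vmodel R d) phi -> sat_exists R d M phi.
Proof.
move=> [x xphi]; have [y yx] := exists_realizes hM hd (dim_vdom x).
exists y => l /xphi; rewrite /sat_lit.
have yt := realizes_eval hM hd (lterm R d l) yx.
have := realizes_rel hM hd (lsub R d l) (dim_vdom _) yt.
by case: (lpos R d l) => /= ->.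
Qed.
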